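(* For any two points $x,y\in\mathbb{R}^n$, the pair $(\{x\},\{y\})$ is an $\mathcal{S}_n$-cute pair, and the pair $(x+B_2^n,\,y+B_2^n)$ is an $\mathcal{S}_n$-cute pair.
   Context: Convex bodies are compact convex non-empty subsets of $\mathbb{R}^n$; $B_2^n$ is the closed Euclidean unit ball; $\delta$ is the Hausdorff distance $\delta(K_0,K_1)=\inf\{\lambda>0: K_0\subseteq K_1+\lambda B_2^n,\ K_1\subseteq K_0+\lambda B_2^n\}$. $\mathcal{S}_n$ is the set of convex bodies in $\mathbb{R}^n$ which are intersections of Euclidean unit balls. A pair $(K_0,K_1)\in\mathcal{S}_n\times\mathcal{S}_n$ is called $\mathcal{S}_n$-cute if $M=\frac{K_0+K_1}{2}$ is the unique body in $\mathcal{S}_n$ satisfying $\delta(K_0,M)=\frac12\delta(K_0,K_1)$ and $\delta(K_1,M)=\frac12\delta(K_0,K_1)$. *)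

From HB Require Import structures.
From mathcomp Require Import all_boot all_order all_algebra.
From mathcomp Require Import all_classical all_reals all_analysis.
Set Implicit Arguments. Unset Strict Implicit. Unset Printing Implicit Defensive.
Import Order.TTheory GRing.Theory Num.Theory.
Import numFieldNormedType.Exports.
Local Open Scope classical_set_scope.
Local Open Scope ring_scope.

Section Defs.
Variables (R : realType) (n : nat).
Notation vec := 'rV[R]_n.

Definition enorm (x : vec) : R := Num.sqrt (\sum_(i < n) x ord0 i ^+ 2).

Definition unit_ball : set vec := [set x | enorm x <= 1].

Definition msum (A B : set vec) : set vec := [set a + b | a in A & b in B].
Definition mscale (l : R) (A : set vec) : set vec := [set l *: a | a in A].
Definition mtrans (x : vec) (A : set vec) : set vec := [set x + a | a in A].

Definition convex (K : set vec) : Prop :=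
  forall a b (t : R), K a -> K b -> 0 <= t -> t <= 1 -> K ((1 - t) *: a + t *: b).

Definition convex_body (K : set vec) : Prop :=
  compact K /\ convex K /\ K !=set0.

Definition hausdorff (K0 K1 : set vec) : R :=
  inf [set l : R | 0 < l /\ K0 `<=` msum K1 (mscale l unit_ball)
                         /\ K1 `<=` msum K0 (mscale l unit_ball)].

Definition Sn (K : set vec) : Prop :=
  convex_body K /\
  exists C : set vec, K = \bigcap_(c in C) mtrans c unit_ball.

Definition Sn_cute (K0 K1 : set vec) : Prop :=
  Sn K0 /\ Sn K1 /\
  let M := mscale (2^-1) (msum K0 K1) in
  let d := hausdorff K0 K1 in
  [/\ Sn M, hausdorff K0 M = d / 2, hausdorff K1 M = d / 2 &
      forall M', Sn M' -> hausdorff K0 M' = d / 2 -> hausdorff K1 M' = d / 2 ->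
                 M' = M].
End Defs.

(* The Hausdorff distance between two points, and between the unit balls around
   them, is |x - y| =: d, and the Minkowski midpoint body is the point (resp. unit
   ball) at m = (x + y)/2.  Let M in S_n be at distance d/2 from both bodies.
   For points, every z in M lies within d/2 of x and of y, which by the
   parallelogram law forces z = m.  For balls, write M as an intersection of unit
   balls c + B.  Then x + B is contained in c + B + l B for every l > d/2, and
   testing this at the point of x + B farthest from c gives |x - c| <= d/2;
   likewise for y, so every centre is m and M = m + B (there is at least one
   centre, since M is compact). *)

From Pilot Require Import Defs.
From HB Require Import structures.
From mathcomp Require Import all_boot all_order all_algebra.
From mathcomp Require Import all_classical all_reals all_analysis.
From mathcomp Require Import unstable ring lra.
Set Implicit Arguments. Unset Strict Implicit. Unset Printing Implicit Defensive.
Import Order.TTheory GRing.Theory Num.Theory.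
Import numFieldTopology.Exports numFieldNormedType.Exports.
Local Open Scope classical_set_scope.
Local Open Scope ring_scope.

Section DotProduct.
Variables (R : realFieldType) (n : nat).
Implicit Types (a b c : 'rV[R]_n) (k l : R).

Definition dotv a b : R := \sum_(i < n) a ord0 i * b ord0 i.
Definition sqnorm a : R := dotv a a.

Lemma dotvC a b : dotv a b = dotv b a.
Proof. by apply: eq_bigr => i _; rewrite mulrC. Qed.

Lemma dotvDl a b c : dotv (a + b) c = dotv a c + dotv b c.
Proof. by rewrite /dotv -big_split; apply: eq_bigr => i _; rewrite mxE mulrDl. Qed.

Lemma dotvZl k a b : dotv (k *: a) b = k * dotv a b.
Proof. by rewrite /dotv mulr_sumr; apply: eq_bigr => i _; rewrite mxE mulrA. Qed.

Lemma dotvDr a b c : dotv a (b + c) = dotv a b + dotv a c.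
Proof. by rewrite dotvC dotvDl !(dotvC a). Qed.

Lemma dotvZr k a b : dotv a (k *: b) = k * dotv a b.
Proof. by rewrite dotvC dotvZl dotvC. Qed.

Lemma sqnorm0 : sqnorm 0 = 0.
Proof. by rewrite /sqnorm -(scale0r 0) dotvZl mul0r. Qed.

Lemma sqnorm_ge0 a : 0 <= sqnorm a.
Proof. by apply: sumr_ge0 => i _; rewrite -expr2 sqr_ge0. Qed.

Lemma sqnorm_coord_le a i : a ord0 i ^+ 2 <= sqnorm a.
Proof.
rewrite /sqnorm /dotv (bigD1 i) //= -expr2 lerDl.
by apply: sumr_ge0 => j _; rewrite -expr2 sqr_ge0.
Qed.

Lemma sqnorm_eq0 a : (sqnorm a == 0) = (a == 0).
Proof.
apply/eqP/eqP => [a0|->]; last exact: sqnorm0.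
apply/rowP => i; rewrite mxE; apply/eqP; rewrite -sqrf_eq0 eq_le sqr_ge0 andbT.
by rewrite -a0 sqnorm_coord_le.
Qed.

Lemma sqnormZ k a : sqnorm (k *: a) = k ^+ 2 * sqnorm a.
Proof. by rewrite /sqnorm dotvZl dotvZr mulrA -expr2. Qed.

Lemma sqnormN a : sqnorm (- a) = sqnorm a.
Proof. by rewrite -scaleN1r sqnormZ sqrrN expr1n mul1r. Qed.

Lemma sqnorm_distC a b : sqnorm (a - b) = sqnorm (b - a).
Proof. by rewrite -opprB sqnormN. Qed.

Lemma sqnormD a b : sqnorm (a + b) = sqnorm a + 2 * dotv a b + sqnorm b.
Proof. rewrite /sqnorm dotvDl !dotvDr (dotvC b a); ring. Qed.

Lemma sqnormB a b : sqnorm (a - b) = sqnorm a - 2 * dotv a b + sqnorm b.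
Proof. rewrite sqnormD -scaleN1r dotvZr sqnormZ sqrrN expr1n; ring. Qed.

Lemma sqnorm_parallelogram a b :
  sqnorm (a + b) + sqnorm (a - b) = 2 * sqnorm a + 2 * sqnorm b.
Proof. rewrite sqnormD sqnormB; ring. Qed.

Lemma sqnormD_le a b : sqnorm (a + b) <= 2 * sqnorm a + 2 * sqnorm b.
Proof. by rewrite -sqnorm_parallelogram lerDl sqnorm_ge0. Qed.

Lemma sqnormB_le a b : sqnorm (a - b) <= 2 * sqnorm a + 2 * sqnorm b.
Proof. by rewrite -(sqnormN b) sqnormD_le. Qed.

Lemma dotv_le_mean a b : 2 * dotv a b <= sqnorm a + sqnorm b.
Proof. by rewrite -subr_ge0 -[_ - _]addrAC -sqnormB sqnorm_ge0. Qed.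

(* AM-GM applied to [a] and [l *: b]. *)
Lemma dotv_le l a b : 0 < l -> sqnorm a <= l ^+ 2 -> sqnorm b <= 1 -> dotv a b <= l.
Proof.
move=> l0 al bl; have := dotv_le_mean a (l *: b); rewrite dotvZr sqnormZ => h.
have : l * (2 * dotv a b) <= l * (2 * l) by nra.
by rewrite ler_pM2l // => ?; lra.
Qed.

End DotProduct.

Section EuclideanBalls.
Variables (R : realType) (n : nat).
Notation vec := 'rV[R]_n.
Notation B := (@unit_ball R n).
Implicit Types (a b c z : vec) (l r : R) (K : set vec).

Lemma enormE a : enorm a = Num.sqrt (sqnorm a). Proof. by []. Qed.

Lemma enorm_ge0 a : 0 <= enorm a. Proof. exact: sqrtr_ge0. Qed.

Lemma sqr_enorm a : enorm a ^+ 2 = sqnorm a.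
Proof. by rewrite sqr_sqrtr // sqnorm_ge0. Qed.

Lemma enorm_le a l : 0 <= l -> (enorm a <= l) = (sqnorm a <= l ^+ 2).
Proof. by move=> l0; rewrite -ler_sqr ?nnegrE ?enorm_ge0 // sqr_enorm. Qed.

Lemma enorm_gt0 a : (0 < enorm a) = (a != 0).
Proof. by rewrite sqrtr_gt0 lt_def sqnorm_ge0 sqnorm_eq0 andbT. Qed.

Lemma enorm_distC a b : enorm (a - b) = enorm (b - a).
Proof. by rewrite !enormE sqnorm_distC. Qed.

Lemma sqnorm_normalize a : a != 0 -> sqnorm ((enorm a)^-1 *: a) = 1.
Proof.
rewrite -enorm_gt0 => a0.
by rewrite sqnormZ -sqr_enorm exprVn mulVf // expf_neq0 // gt_eqF.
Qed.

Lemma unit_ballE a : B a <-> sqnorm a <= 1.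
Proof. by rewrite /unit_ball /= enorm_le // expr1n. Qed.

Lemma mscale_ballE l z : 0 < l -> Defs.mscale l B z <-> sqnorm z <= l ^+ 2.
Proof.
move=> l0; split => [[a /unit_ballE a1 <-]|zl]; first by rewrite sqnormZ; nra.
exists (l^-1 *: z); last by rewrite scalerA mulfV ?gt_eqF // scale1r.
by apply/unit_ballE; rewrite sqnormZ exprVn ler_pdivrMl ?exprn_gt0 // mulr1.
Qed.

Lemma mtrans_ballE c z : mtrans c B z <-> sqnorm (z - c) <= 1.
Proof.
split => [[a /unit_ballE a1 <-]|zc]; first by rewrite addrC addKr.
by exists (z - c); [apply/unit_ballE | rewrite addrC subrK].
Qed.

Lemma mtrans_ball_center c : mtrans c B c.
Proof. by apply/mtrans_ballE; rewrite subrr sqnorm0 ler01. Qed.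

Lemma mscale_ballS l l' : 0 < l -> l <= l' -> Defs.mscale l B `<=` Defs.mscale l' B.
Proof.
move=> l0 ll' z /(mscale_ballE _ l0) zl; apply/mscale_ballE; first lra.
by apply: le_trans zl _; rewrite ler_pXn2r ?nnegrE //; lra.
Qed.

Lemma msumSS K0 K0' K1 K1' :
  K0 `<=` K0' -> K1 `<=` K1' -> Defs.msum K0 K1 `<=` Defs.msum K0' K1'.
Proof. by move=> s0 s1 z [a /s0 a0 [b /s1 b1 <-]]; exists a => //; exists b. Qed.

Lemma inf_pos_ge r : 0 <= r -> inf [set l : R | 0 < l /\ r <= l] = r.
Proof.
move=> r0; apply/eqP; rewrite eq_le; apply/andP; split.
- apply/ler_gtP => l rl; apply: ge_inf; first by exists r => ? [].
  by split; lra.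
- by apply: lb_le_inf => [|l []//]; exists (r + 1); split; lra.
Qed.

Lemma compact_sqnorm_bounded K : compact K -> exists Q, forall z, K z -> sqnorm z <= Q.
Proof.
move=> /compact_bounded /ex_strict_bound_gt0 [M M0 KM].
exists (\sum_(i < n) M ^+ 2) => z Kz; apply: ler_sum => i _.
have : `|z ord0 i| <= M.
  apply: le_trans (ltW (KM z Kz)).
  have -> : `|z| = mx_norm z by [].
  rewrite mx_normrE.
  exact: (le_bigmax _ _ (ord0, i)).
by rewrite ler_norml -expr2 => /andP[? ?]; nra.
Qed.

Lemma sub_msum_scale_ball K0 K1 b l : 0 < l -> K1 b ->
  (forall a, K0 a -> sqnorm (a - b) <= l ^+ 2) -> K0 `<=` Defs.msum K1 (Defs.mscale l B).
Proof.
move=> l0 K1b close a K0a; exists b => //.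
by exists (a - b); [exact/mscale_ballE/close | rewrite addrC subrK].
Qed.

Lemma hausdorff_admissible K0 K1 :
  compact K0 -> compact K1 -> K0 !=set0 -> K1 !=set0 ->
  exists l, 0 < l /\ K0 `<=` Defs.msum K1 (Defs.mscale l B)
                  /\ K1 `<=` Defs.msum K0 (Defs.mscale l B).
Proof.
move=> /compact_sqnorm_bounded[Q0 K0Q] /compact_sqnorm_bounded[Q1 K1Q] [b0 K0b] [b1 K1b].
have Q0_ge0 := le_trans (sqnorm_ge0 _) (K0Q _ K0b).
have Q1_ge0 := le_trans (sqnorm_ge0 _) (K1Q _ K1b).
pose l := 2 * Q0 + 2 * Q1 + 1.
have l0 : 0 < l by rewrite /l; lra.
have Ql : 2 * Q0 + 2 * Q1 <= l ^+ 2 by rewrite /l; nra.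
exists l; split => //; split;
  [apply: (sub_msum_scale_ball l0 K1b) | apply: (sub_msum_scale_ball l0 K0b)] => a Ka;
  apply: le_trans (sqnormB_le _ _) _.
- by have := K0Q a Ka; have := K1Q b1 K1b; lra.
- by have := K1Q a Ka; have := K0Q b0 K0b; lra.
Qed.

Lemma hausdorff_lt_sub K0 K1 l :
  compact K0 -> compact K1 -> K0 !=set0 -> K1 !=set0 ->
  hausdorff K0 K1 < l ->
  K0 `<=` Defs.msum K1 (Defs.mscale l B) /\ K1 `<=` Defs.msum K0 (Defs.mscale l B).
Proof.
move=> c0 c1 ne0 ne1 /(inf_lt (hausdorff_admissible c0 c1 ne0 ne1)) [l' [l'0 [s0 s1]] l'l].
have grow K : Defs.msum K (Defs.mscale l' B) `<=` Defs.msum K (Defs.mscale l B).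
  exact: msumSS (mscale_ballS l'0 (ltW l'l)).
by split; apply: subset_trans (grow _).
Qed.

Lemma hausdorff_eq K0 K1 r : 0 <= r ->
  (forall l, 0 < l -> K0 `<=` Defs.msum K1 (Defs.mscale l B)
                   /\ K1 `<=` Defs.msum K0 (Defs.mscale l B) <-> r <= l) ->
  hausdorff K0 K1 = r.
Proof.
move=> r0 adm; rewrite /hausdorff -[RHS](inf_pos_ge r0); congr inf.
by apply/seteqP; split => l [l0 h]; split => //; apply/(adm l l0).
Qed.

Lemma sub_msum_set1 a b l : 0 < l ->
  [set a] `<=` Defs.msum [set b] (Defs.mscale l B) <-> enorm (a - b) <= l.
Proof.
move=> l0; rewrite (enorm_le _ (ltW l0)); split => [sub | ab].
- have [_ -> [w /(mscale_ballE _ l0) wl <-]] := sub a erefl.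
  by rewrite addrC addKr.
- by apply: (sub_msum_scale_ball l0 (erefl b)) => _ ->.
Qed.

Lemma hausdorff_set1 a b : hausdorff [set a] [set b] = enorm (a - b).
Proof.
apply: hausdorff_eq => [|l l0]; first exact: enorm_ge0.
by rewrite !sub_msum_set1 // (enorm_distC b); split => [[]|].
Qed.

(* Decompose [a + u] = p + w with [p] in [c + B] and [w] in [l B], where [u] is the
   unit vector from [c] to [a]; the components along [u] give [|a - c| + 1 <= 1 + l]. *)
Lemma ball_sub_msum_dist_le a c l : 0 < l ->
  mtrans a B `<=` Defs.msum (mtrans c B) (Defs.mscale l B) -> enorm (a - c) <= l.
Proof.
move=> l0 sub; have [->|ac] := eqVneq (a - c) 0.
  by rewrite enormE sqnorm0 sqrtr0 ltW.
have r0 : 0 < enorm (a - c) by rewrite enorm_gt0.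
set r := enorm (a - c) in r0 *; set u := r^-1 *: (a - c).
have u1 : sqnorm u = 1 := sqnorm_normalize ac.
have [p /mtrans_ballE pc [w /(mscale_ballE _ l0) wl apw]] :
    Defs.msum (mtrans c B) (Defs.mscale l B) (a + u).
  by apply: sub; apply/mtrans_ballE; rewrite addrC addKr u1.
have acu : dotv (a - c + u) u = r + 1.
  rewrite dotvDl -/(sqnorm u) u1 /u dotvZr -/(sqnorm _) -sqr_enorm -/r.
  by field; exact: lt0r_neq0.
have pcw : a - c + u = p - c + w by rewrite addrAC -apw addrAC.
have pcu : dotv (p - c) u <= 1 by apply: dotv_le; rewrite ?expr1n ?u1.
have wu : dotv w u <= l by apply: dotv_le; rewrite ?u1.
by move: acu; rewrite pcw dotvDl; lra.
Qed.

Lemma sub_msum_ball a b l : 0 < l ->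
  mtrans a B `<=` Defs.msum (mtrans b B) (Defs.mscale l B) <-> enorm (a - b) <= l.
Proof.
move=> l0; split; first exact: ball_sub_msum_dist_le.
rewrite (enorm_le _ (ltW l0)) => ab z /mtrans_ballE za.
exists (b + (z - a)); first by apply/mtrans_ballE; rewrite addrC addKr.
exists (a - b); first exact/mscale_ballE.
by rewrite addrC addrA subrK addrC subrK.
Qed.

Lemma hausdorff_ball a b : hausdorff (mtrans a B) (mtrans b B) = enorm (a - b).
Proof.
apply: hausdorff_eq => [|l l0]; first exact: enorm_ge0.
by rewrite !sub_msum_ball // (enorm_distC b); split => [[]|].
Qed.

Definition midpoint a b : vec := 2^-1 *: (a + b).

Lemma enorm_sub_midpointl a b : enorm (a - midpoint a b) = enorm (a - b) / 2.
Proof.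
have -> : a - midpoint a b = 2^-1 *: (a - b) by apply/rowP => i; rewrite !mxE; field.
by rewrite !enormE sqnormZ sqrtrM ?sqr_ge0 // sqrtr_sqr ger0_norm ?invr_ge0 // mulrC.
Qed.

Lemma enorm_sub_midpointr a b : enorm (b - midpoint a b) = enorm (a - b) / 2.
Proof. by rewrite /midpoint [a + b]addrC enorm_sub_midpointl enorm_distC. Qed.

(* Equality case of the parallelogram law. *)
Lemma midpoint_unique a b c : enorm (a - c) <= enorm (a - b) / 2 ->
  enorm (b - c) <= enorm (a - b) / 2 -> c = midpoint a b.
Proof.
have d0 : 0 <= enorm (a - b) / 2 by rewrite divr_ge0 ?enorm_ge0.
rewrite !enorm_le // => ac bc.
have := sqnorm_parallelogram (a - c) (b - c).
have -> : a - c - (b - c) = a - b by rewrite opprB addrA subrK.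
rewrite -[sqnorm (a - b)]sqr_enorm => par.
have : sqnorm (a - c + (b - c)) == 0.
  by rewrite eq_le sqnorm_ge0 andbT; nra.
rewrite sqnorm_eq0 => /eqP/rowP abc; apply/rowP => i.
by move: (abc i); rewrite !mxE; lra.
Qed.

Lemma mscale_msum_set1 a b :
  Defs.mscale 2^-1 (Defs.msum [set a] [set b]) = [set midpoint a b].
Proof.
apply/seteqP; split => [_ [_ [_ -> [_ -> <-]] <-] // | _ ->].
by exists (a + b) => //; exists a => //; exists b.
Qed.

Lemma mscale_msum_ball a b :
  Defs.mscale 2^-1 (Defs.msum (mtrans a B) (mtrans b B)) = mtrans (midpoint a b) B.
Proof.
apply/seteqP; split.
  move=> _ [_ [p /mtrans_ballE pa [q /mtrans_ballE qb <-]] <-]; apply/mtrans_ballE.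
  have -> : 2^-1 *: (p + q) - midpoint a b = 2^-1 *: ((p - a) + (q - b)).
    by apply/rowP => i; rewrite !mxE; field.
  rewrite sqnormZ; have := sqnormD_le (p - a) (q - b).
  have -> : (2^-1 : R) ^+ 2 = 4^-1 by field.
  lra.
move=> z /mtrans_ballE zm; set v := z - midpoint a b.
exists ((a + v) + (b + v)).
  exists (a + v); first by apply/mtrans_ballE; rewrite addrC addKr.
  by exists (b + v) => //; apply/mtrans_ballE; rewrite addrC addKr.
by apply/rowP => i; rewrite !mxE; field.
Qed.

Lemma continuous_sqnorm : continuous (@sqnorm R n).
Proof.
have -> : @sqnorm R n = \sum_(i < n) (fun z : vec => z ord0 i * z ord0 i).
  by apply/funext => z; rewrite fct_sumE.
apply: (big_ind (fun f : vec -> R => continuous f)) => [|f g fc gc|i _].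
- exact: (@cst_continuous _ _ (0 : R)).
- by move=> z; apply: continuousD; [exact: fc | exact: gc].
- by move=> z; apply: continuousM; exact: coord_continuous.
Qed.

Lemma compact_ball c : compact (mtrans c B).
Proof.
pose box := [set v : vec | forall i, `[c ord0 i - 1, c ord0 i + 1]%classic (v ord0 i)].
apply: (@subclosed_compact _ _ box).
- have -> : mtrans c B = (fun z => sqnorm (z - c)) @^-1` [set t | t <= 1].
    by apply/seteqP; split => z /mtrans_ballE.
  apply: preimage_closed => [z _|]; last exact: closed_le.
  apply: continuous_comp; last exact: continuous_sqnorm.
  by apply: continuousB; [exact: cvg_id | exact: cst_continuous].
- exact: (rV_compact (fun i => @segment_compact R (c ord0 i - 1) (c ord0 i + 1))).
- move=> z /mtrans_ballE zc i /=; rewrite in_itv /=.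
  have := le_trans (sqnorm_coord_le (z - c) i) zc; rewrite !mxE => h.
  by apply/andP; split; nra.
Qed.

Lemma convex_ball c : convex (mtrans c B).
Proof.
move=> a b t /mtrans_ballE ac /mtrans_ballE bc t0 t1; apply/mtrans_ballE.
have -> : (1 - t) *: a + t *: b - c = (1 - t) *: (a - c) + t *: (b - c).
  by apply/rowP => i; rewrite !mxE; ring.
rewrite sqnormD !sqnormZ dotvZl dotvZr.
have tt0 : 0 <= t * (1 - t) by nra.
have := ler_wpM2l tt0 (dotv_le_mean (a - c) (b - c)).
have := sqnorm_ge0 (a - c); have := sqnorm_ge0 (b - c).
nra.
Qed.

Lemma Sn_ball c : Sn (mtrans c B).
Proof.
split; last by exists [set c]; rewrite bigcap_set1.
split; first exact: compact_ball.
by split; [exact: convex_ball | exists c; exact: mtrans_ball_center].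
Qed.

(* [a] is the intersection of the unit balls centred on the unit sphere around [a]. *)
Lemma Sn_set1 a : Sn [set a].
Proof.
split.
  split; [exact: compact_set1 | split; last by exists a].
  by move=> _ _ t -> -> _ _; rewrite -scalerDl subrK scale1r.
exists [set c | sqnorm (c - a) = 1]; apply/seteqP; split.
  by move=> _ -> c ca; apply/mtrans_ballE; rewrite sqnorm_distC ca.
move=> z za; apply/eqP; rewrite -subr_eq0; apply/negPn/negP => za0.
have r0 : 0 < enorm (z - a) by rewrite enorm_gt0.
set r := enorm (z - a) in r0; set u := r^-1 *: (z - a).
have /mtrans_ballE : mtrans (a - u) B z.
  by apply: za; rewrite /= addrAC subrr add0r sqnormN sqnorm_normalize.
have -> : z - (a - u) = (1 + r^-1) *: (z - a) by apply/rowP => i; rewrite !mxE; ring.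
rewrite sqnormZ -sqr_enorm -/r -exprMn mulrDl mul1r mulVf ?gt_eqF //.
by nra.
Qed.

Lemma compact_setT_eq0 : compact [set: vec] -> forall z : vec, z = 0.
Proof.
move=> /compact_sqnorm_bounded[Q TQ] z; apply/rowP => i; exfalso.
have := le_trans (sqnorm_coord_le (const_mx (`|Q| + 1)) i) (TQ _ I); rewrite mxE.
by have := ler_norm Q; have := normr_ge0 Q; nra.
Qed.

Lemma Sn_cute_set1 a b : Sn_cute [set a] [set b].
Proof.
split; first exact: Sn_set1; split; first exact: Sn_set1.
cbv zeta; rewrite mscale_msum_set1 !hausdorff_set1.
rewrite enorm_sub_midpointl enorm_sub_midpointr; split => //; first exact: Sn_set1.
set d := enorm (a - b) / 2; have d0 : 0 <= d by rewrite divr_ge0 ?enorm_ge0.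
move=> M [[cM [_ neM]] _] aM bM.
have dist_le c z : hausdorff [set c] M = d -> M z -> enorm (c - z) <= d.
  move=> cM_d Mz; apply/ler_gtP => l dl; have l0 : 0 < l by lra.
  have cM_l : hausdorff [set c] M < l by rewrite cM_d.
  have [_ /(_ z Mz)] :=
    hausdorff_lt_sub (@compact_set1 _ c) cM (ex_intro _ c erefl) neM cM_l.
  by move=> cz; rewrite enorm_distC; apply/(sub_msum_set1 _ _ l0) => _ ->.
have Mmid z : M z -> z = midpoint a b by move=> Mz; apply: midpoint_unique; apply: dist_le.
apply/seteqP; split => [z /Mmid -> // | _ ->].
by have [z Mz] := neM; rewrite -(Mmid z Mz).
Qed.

Lemma Sn_cute_ball a b : Sn_cute (mtrans a B) (mtrans b B).
Proof.
split; first exact: Sn_ball; split; first exact: Sn_ball.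
cbv zeta; rewrite mscale_msum_ball !hausdorff_ball.
rewrite enorm_sub_midpointl enorm_sub_midpointr; split => //; first exact: Sn_ball.
set d := enorm (a - b) / 2; have d0 : 0 <= d by rewrite divr_ge0 ?enorm_ge0.
move=> M [[cM [_ neM]] [C MC]] aM bM.
have M_sub c : C c -> M `<=` mtrans c B by move=> Cc z; rewrite MC => /(_ c Cc).
have dist_le c e : hausdorff (mtrans c B) M = d -> C e -> enorm (c - e) <= d.
  move=> cM_d Ce; apply/ler_gtP => l dl; have l0 : 0 < l by lra.
  have cM_l : hausdorff (mtrans c B) M < l by rewrite cM_d.
  have [sub _] := hausdorff_lt_sub (@compact_ball c) cM
    (ex_intro _ c (mtrans_ball_center c)) neM cM_l.
  by apply/(sub_msum_ball _ _ l0); apply: subset_trans sub (msumSS (M_sub e Ce) _).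
have Cmid e : C e -> e = midpoint a b by move=> Ce; apply: midpoint_unique; apply: dist_le.
apply/seteqP; split => [z Mz | z zm]; last by rewrite MC => c /Cmid ->.
have [C0|/set0P[e Ce]] := eqVneq C set0; last by rewrite -(Cmid e Ce); exact: M_sub.
(* An empty family of balls would make [M] the whole, non-compact space. *)
rewrite MC C0 bigcap_set0 in cM.
by apply/mtrans_ballE; rewrite (compact_setT_eq0 cM (z - _)) sqnorm0 ler01.
Qed.

End EuclideanBalls.

Theorem lemma5 (R : realType) (n : nat) (x y : 'rV[R]_n) :
  Sn_cute [set x] [set y] /\
  Sn_cute (mtrans x (@unit_ball R n)) (mtrans y (@unit_ball R n)).
Proof. by split; [exact: Sn_cute_set1 | exact: Sn_cute_ball]. Qed.
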